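(* Let $\mathcal{G}_R(\mathcal{N}_R,\mathcal{E}_R)$ be an R-graph with ingress points $\mathcal{M}$ and parent-selection probabilities $p_{ij}$, and for $\mathcal{X}\subseteq\mathcal{N}_R$ let $$F(\mathcal{X})=E_P[\mathcal{NC}_R(\mathcal{X})]=\sum_{x\in\mathcal{M}^{|\mathcal{X}|}}\mathcal{NC}_R(\mathcal{X}\rhd x)\,P(\mathcal{X}\rhd x)$$ (as defined in the context). Then the set function $F$ is (i) non-negative and monotone (non-decreasing), (ii) not submodular in general, and (iii) not supermodular in general (i.e., there exist R-graphs for which $F$ is not submodular, and R-graphs for which $F$ is not supermodular).
   Context: An R-graph is a directed acyclic graph $\mathcal{G}_R(\mathcal{N}_R,\mathcal{E}_R)$ rooted at a destination node $n_{dst}$; an edge $j\to i$ means $i$ may use the routing path learned from its parent $j$; $P_i$ denotes the parents of $i$. $n_{dst}$ has a finite set $\mathcal{M}$ of ingress points, each child of $n_{dst}$ attached to exactly one. Each node $i$ selects a parent $j\in P_i$ with probability $p_{ij}$ ($\sum_{j\in P_i}p_{ij}=1$) and routes its traffic through the same ingress point as the selected parent; we write $i\rhd m$ if $i$ routes through ingress point $m$. For a set $\mathcal{X}$ of (measured) nodes and a vector $x\in\mathcal{M}^{|\mathcal{X}|}$, $\mathcal{X}\rhd x$ denotes the event that each node of $\mathcal{X}$ routes through the corresponding entry of $x$, and $P(\mathcal{X}\rhd x)$ is its probability. $\mathcal{NC}_R(\mathcal{X}\rhd x)=|\{i\in\mathcal{N}_R: f(i)\neq 0\mid \mathcal{X}\rhd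 x\}|$ is the number of nodes whose route is inferred with certainty (their route is determined, i.e., has probability $1$ for some ingress point) given the oracle $\mathcal{X}\rhd x$. A set function $F$ is submodular if $F(A\cup\{\epsilon\})-F(A)\ge F(B\cup\{\epsilon\})-F(B)$ for all $A\subseteq B$ and $\epsilon\notin B$, and supermodular if the reverse inequality always holds. *)

From HB Require Import structures.
From mathcomp Require Import all_boot all_order all_algebra.
Set Implicit Arguments. Unset Strict Implicit. Unset Printing Implicit Defensive.
Import Order.TTheory GRing.Theory Num.Theory.
Local Open Scope ring_scope.

(* An R-graph: nodes V (including the destination dst), parent relation
   par i j  <->  j \in P_i  (edge j -> i), ingress points M, ingress map
   ing (meaningful for children of dst), parent-selection probabilities p. *)
Record Rgraph (R : realFieldType) := RGraph {
  node : finType;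
  ingress : finType;
  dst : node;
  par : rel node;
  ing : node -> ingress;
  p : node -> node -> R;
  par_acyclic : forall i j, par i j -> ~~ connect par j i;
  dst_root : forall j, ~~ par dst j;
  p_ge0 : forall i j, par i j -> 0 <= p i j;
  p_sum1 : forall i, i != dst -> \sum_(j | par i j) p i j = 1
}.

Section Defs.
Variable R : realFieldType.
Variable G : Rgraph R.

Local Notation V := (node G).
Local Notation M := (ingress G).

(* A parent selection: sigma i is the parent selected by node i. *)
Definition selection := {ffun V -> V}.

Definition wsel (s : selection) : R :=
  \prod_(i | i != @dst R G) (if @par R G i (s i) then @p R G i (s i) else 0).

(* follow selected parents until reaching a node whose selected parent is dst *)
Definition step (s : selection) (i : V) : V :=
  if (i == @dst R G) || (s i == @dst R G) then i else s i.

Definition route (s : selection) (i : V) : M :=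
  @ing R G (iter #|V| (step s) i).

Definition Pr (E : pred selection) : R := \sum_(s | E s) wsel s.

Definition ev (X : {set V}) (x : {ffun {i : V | i \in X} -> M}) : pred selection :=
  fun s => [forall k, route s (val k) == x k].

Definition NC (X : {set V}) (x : {ffun {i : V | i \in X} -> M}) : nat :=
  #|[set i : V | (i != @dst R G) &&
      [exists m : M,
         Pr (fun s => ev x s && (route s i == m)) / Pr (ev x) == 1]]|.

Definition F (X : {set V}) : R :=
  \sum_(x : {ffun {i : V | i \in X} -> M}) (NC x)%:R * Pr (ev x).

Definition NR : {set V} := [set~ @dst R G].

End Defs.

Definition submodular_on (T : finType) (R : realFieldType)
  (N : {set T}) (f : {set T} -> R) : Prop :=
  forall (A B : {set T}) (e : T), A \subset B -> B \subset N ->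
    e \in N -> e \notin B ->
    f (e |: B) - f B <= f (e |: A) - f A.

Definition supermodular_on (T : finType) (R : realFieldType)
  (N : {set T}) (f : {set T} -> R) : Prop :=
  forall (A B : {set T}) (e : T), A \subset B -> B \subset N ->
    e \in N -> e \notin B ->
    f (e |: A) - f A <= f (e |: B) - f B.

From HB Require Import structures.
From mathcomp Require Import all_boot all_order all_algebra.
From mathcomp Require Import lra zify.
Set Implicit Arguments. Unset Strict Implicit. Unset Printing Implicit Defensive.
Import Order.TTheory GRing.Theory Num.Theory.
Local Open Scope ring_scope.

(* Conditioning on the observed routes of X under a selection s amounts to
   restricting to the positive-probability selections that agree with s on X,
   and the route of a node is certain iff it is constant on that set.  Hence
   F X is the expectation over s of the number of nodes so determined, which
   can only grow with X.  In the counterexample, U and V each pick dst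
   (ingress true) or A (ingress false) and W picks U or V: observing U or V
   alone reveals nothing else, while observing both also reveals W whenever
   they agree.  So adding U to {V} gains more than adding it to the empty
   set, and adding W to {U, V} gains less than adding it to the empty set. *)

Section ExpectedCoverage.
Variables (R : realFieldType) (G : Rgraph R).
Local Notation V := (node G).
Local Notation M := (ingress G).
Local Notation dst := (@dst R G).
Local Notation sel := (selection G).
Local Notation wsel := (@wsel R G).
Local Notation Pr := (@Pr R G).
Local Notation route := (@route R G).

Lemma route_fixpoint (s : sel) i k : (k <= #|V|)%N ->
  step s (iter k (step s) i) = iter k (step s) i -> route s i = ing (iter k (step s) i).
Proof. by move=> le_k_V fix_k; rewrite /route -(subnK le_k_V) iterD iter_fix. Qed.

Definition supported (s : sel) :=
  [forall i, (i != dst) ==> par i (s i) && (0 < p i (s i))].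

Lemma wsel_ge0 (s : sel) : 0 <= wsel s.
Proof. by apply: prodr_ge0 => i _; case: ifP => // /p_ge0. Qed.

Lemma wsel_gt0 (s : sel) : supported s -> 0 < wsel s.
Proof.
move=> /forallP supp_s; apply: prodr_gt0 => i i_ndst.
by move: (supp_s i); rewrite i_ndst => /andP[-> ->].
Qed.

Lemma wsel_eq0 (s : sel) : ~~ supported s -> wsel s = 0.
Proof.
case/forallPn=> i; rewrite negb_imply => /andP[i_ndst].
rewrite /wsel (bigD1 i) //=; case: ifP => [par_i|_ _]; last by rewrite mul0r.
by rewrite /= lt_def p_ge0 // andbT negbK => /eqP ->; rewrite mul0r.
Qed.

Lemma Pr_gt0 (E : pred sel) s : supported s -> E s -> 0 < Pr E.
Proof.
move=> supp_s Es; rewrite /Pr (bigD1 s) //= ltr_pwDl ?wsel_gt0 //.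
by apply: sumr_ge0 => t _; exact: wsel_ge0.
Qed.

Lemma Pr_eq0P (E : pred sel) : reflect (forall s, supported s -> ~~ E s) (Pr E == 0).
Proof.
apply: (iffP eqP) => [PrE0 s supp_s|null_E]; last first.
  by apply: big1 => s Es; apply: wsel_eq0; apply: contraL Es; exact: null_E.
apply/negP => Es; have := psumr_eq0P (fun t _ => wsel_ge0 t) PrE0 Es.
by move/eqP; rewrite gt_eqF ?wsel_gt0.
Qed.

Lemma Pr_cond1 (C E : pred sel) : Pr C != 0 ->
  (Pr (fun t => C t && E t) / Pr C == 1) = (Pr (fun t => C t && ~~ E t) == 0).
Proof.
have -> : Pr C = Pr (fun t => C t && E t) + Pr (fun t => C t && ~~ E t).
  by rewrite /Pr (bigID E).
move=> PrC_neq0; rewrite -[1](divr1 1) eqr_div ?oner_neq0 // mulr1 mul1r.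
by rewrite -{1}[Pr (fun t => _ && E t)]addr0 (inj_eq (addrI _)) eq_sym.
Qed.

Definition agree_on (X : {set V}) (s t : sel) :=
  [forall k in X, route t k == route s k].

Lemma agree_onP (X : {set V}) (s t : sel) :
  reflect {in X, route t =1 route s} (agree_on X s t).
Proof. by apply: (iffP forall_inP) => agr k kX; apply/eqP; exact: agr. Qed.

Lemma agree_on_refl (X : {set V}) (s : sel) : agree_on X s s.
Proof. exact/agree_onP. Qed.

Definition observation (X : {set V}) (s : sel) : {ffun {i | i \in X} -> M} :=
  [ffun k => route s (val k)].

Lemma evE (X : {set V}) x (s : sel) : ev x s = (observation X s == x).
Proof.
apply/forallP/eqP => [obs_x|<- k]; last by rewrite ffunE.
by apply/ffunP => k; rewrite ffunE; apply/eqP; exact: obs_x.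
Qed.

Lemma ev_observation (X : {set V}) (s t : sel) : ev (observation X s) t = agree_on X s t.
Proof.
rewrite evE; apply/eqP/agree_onP => [obs_eq k kX|agr].
  by move/ffunP/(_ (exist _ k kX)): obs_eq; rewrite !ffunE.
by apply/ffunP => k; rewrite !ffunE agr ?(valP k).
Qed.

Definition determined (X : {set V}) (s : sel) (i : V) :=
  [exists m, [forall (t | supported t && agree_on X s t), route t i == m]].

Definition NCsel (X : {set V}) (s : sel) :=
  #|[set i | (i != dst) && determined X s i]|.

Lemma cond_prob1_determined (X : {set V}) (s : sel) i : supported s ->
  [exists m, Pr (fun t => agree_on X s t && (route t i == m)) / Pr (agree_on X s) == 1]
  = determined X s i.
Proof.
move=> supp_s; apply: eq_existsb => m.
have PrX_neq0 : Pr (agree_on X s) != 0 by rewrite gt_eqF ?(Pr_gt0 supp_s) ?agree_on_refl.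
rewrite (@Pr_cond1 (agree_on X s) (fun t => route t i == m)) //.
apply/Pr_eq0P/forallP => [null t|all_m t supp_t].
  by apply/implyP => /andP[supp_t agr]; move: (null t supp_t); rewrite agr negbK.
rewrite negb_and negbK -implybE; apply/implyP => agr.
by apply: (implyP (all_m t)); apply/andP.
Qed.

Lemma NC_observation (X : {set V}) (s : sel) :
  supported s -> NC (observation X s) = NCsel X s.
Proof.
move=> supp_s; apply: eq_card => i; rewrite !inE -cond_prob1_determined //.
congr (_ && _); apply: eq_existsb => m.
by congr (_ / _ == 1); apply: eq_bigl => t; rewrite ev_observation.
Qed.

Lemma F_expectation (X : {set V}) : F X = \sum_s wsel s * (NCsel X s)%:R.
Proof.
rewrite /F (partition_big (observation X) predT) //=.
apply: eq_bigr => x _; rewrite /Pr mulr_sumr; apply: eq_big => s; first by rewrite evE.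
rewrite evE => /eqP <-; have [supp_s|unsupp_s] := boolP (supported s).
  by rewrite NC_observation // mulrC.
by rewrite wsel_eq0 // mulr0 mul0r.
Qed.

Lemma determined_mem (X : {set V}) (s : sel) i : i \in X -> determined X s i.
Proof.
move=> iX; apply/existsP; exists (route s i); apply/forall_inP => t /andP[_].
by move/agree_onP/(_ i iX) ->.
Qed.

Lemma determined_subset (X Y : {set V}) (s : sel) i :
  X \subset Y -> determined X s i -> determined Y s i.
Proof.
move=> sXY /existsP[m /forall_inP det_m]; apply/existsP; exists m.
apply/forall_inP => t /andP[supp_t /agree_onP agr]; apply: det_m; rewrite supp_t.
by apply/agree_onP => k /(subsetP sXY); exact: agr.
Qed.

Lemma undetermined (X : {set V}) (s t1 t2 : sel) i : supported t1 -> supported t2 ->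
  agree_on X s t1 -> agree_on X s t2 -> route t1 i != route t2 i -> ~~ determined X s i.
Proof.
move=> supp1 supp2 agr1 agr2; apply: contraL => /existsP[m /forall_inP det_m].
have /eqP -> : route t1 i == m by apply: det_m; rewrite supp1.
have /eqP -> : route t2 i == m by apply: det_m; rewrite supp2.
by rewrite eqxx.
Qed.

Lemma NCsel_ge (X S : {set V}) (s : sel) :
  (forall i, i \in S -> (i != dst) && determined X s i) -> (#|S| <= NCsel X s)%N.
Proof. by move=> sub_S; apply/subset_leq_card/subsetP => i /sub_S; rewrite inE. Qed.

Lemma NCsel_le (X S : {set V}) (s : sel) :
  (forall i, (i != dst) && determined X s i -> i \in S) -> (NCsel X s <= #|S|)%N.
Proof. by move=> sub_S; apply/subset_leq_card/subsetP => i; rewrite inE => /sub_S. Qed.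

Lemma NCsel_subset (X Y : {set V}) (s : sel) : X \subset Y -> (NCsel X s <= NCsel Y s)%N.
Proof.
move=> sXY; apply/subset_leq_card/subsetP => i; rewrite !inE.
by case/andP=> -> /(determined_subset sXY).
Qed.

Lemma F_ge0 (X : {set V}) : 0 <= F X.
Proof. by rewrite F_expectation; apply: sumr_ge0 => s _; rewrite mulr_ge0 ?wsel_ge0. Qed.

Lemma F_mono (X Y : {set V}) : X \subset Y -> F X <= F Y.
Proof.
move=> sXY; rewrite !F_expectation; apply: ler_sum => s _.
by rewrite ler_wpM2l ?wsel_ge0 // ler_nat NCsel_subset.
Qed.

Lemma F_add_lt (X1 X2 Y1 Y2 : {set V}) (t : sel) :
  (forall s, supported s -> NCsel X1 s + NCsel X2 s <= NCsel Y1 s + NCsel Y2 s)%N ->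
  supported t -> (NCsel X1 t + NCsel X2 t < NCsel Y1 t + NCsel Y2 t)%N ->
  F X1 + F X2 < F Y1 + F Y2.
Proof.
move=> le_NC supp_t lt_NC; rewrite !F_expectation -!big_split /=.
rewrite (bigD1 t) // [ltRHS](bigD1 t) //= -!mulrDr -!natrD.
rewrite ltr_leD ?ltr_pM2l ?ltr_nat ?wsel_gt0 //; apply: ler_sum => s _.
have [supp_s|unsupp_s] := boolP (supported s); last by rewrite wsel_eq0 // !mul0r.
by rewrite -!mulrDr -!natrD ler_wpM2l ?wsel_ge0 // ler_nat le_NC.
Qed.

End ExpectedCoverage.

Inductive ex_node := D | A | U | V | W.

Definition ex_node_code (x : ex_node) : nat :=
  match x with D => 0 | A => 1 | U => 2 | V => 3 | W => 4 end.
Definition ex_node_decode (n : nat) : option ex_node :=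
  nth None [:: Some D; Some A; Some U; Some V; Some W] n.
Lemma ex_node_codeK : pcancel ex_node_code ex_node_decode. Proof. by case. Qed.

HB.instance Definition _ := Countable.copy ex_node (pcan_type ex_node_codeK).
Lemma ex_node_enumP : Finite.axiom [:: D; A; U; V; W]. Proof. by case. Qed.
HB.instance Definition _ := isFinite.Build ex_node ex_node_enumP.

Lemma card_ex_node : #|{: ex_node}| = 5%N.
Proof. by rewrite cardT enumT unlock. Qed.

Definition ex_par (i j : ex_node) : bool :=
  match i, j with
  | A, D | U, D | U, A | V, D | V, A | W, U | W, V => true
  | _, _ => false
  end.

Definition ex_ing (i : ex_node) : bool := match i with U | V => true | _ => false end.

Definition ex_rank (i : ex_node) : nat :=
  match i with D => 0 | A => 1 | U | V => 2 | W => 3 end.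

Lemma ex_par_rank i j : ex_par i j -> (ex_rank j < ex_rank i)%N.
Proof. by case: i; case: j. Qed.

Lemma connect_ex_rank i j : connect ex_par j i -> (ex_rank i <= ex_rank j)%N.
Proof.
case/connectP=> q + ->{i}; elim: q j => //= k q IHq j /andP[par_jk /IHq].
by move/leq_trans; apply; exact/ltnW/ex_par_rank.
Qed.

Lemma ex_par_acyclic i j : ex_par i j -> ~~ connect ex_par j i.
Proof. by move/ex_par_rank; apply: contraL => /connect_ex_rank; rewrite -leqNgt. Qed.

Lemma ex_dst_root j : ~~ ex_par D j. Proof. by case: j. Qed.

Section Counterexample.
Variable R : realFieldType.

Definition ex_p (i j : ex_node) : R := if i == A then 1 else 2^-1.

Lemma ex_p_gt0 i j : 0 < ex_p i j.
Proof. by rewrite /ex_p; case: ifP; rewrite ?invr_gt0 ?ltr0n. Qed.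

Lemma ex_p_ge0 i j : ex_par i j -> 0 <= ex_p i j.
Proof. by move=> _; rewrite ltW ?ex_p_gt0. Qed.

Lemma ex_p_sum1 i : i != D -> \sum_(j | ex_par i j) ex_p i j = 1.
Proof.
have half2 : 2^-1 + 2^-1 = 1 :> R by lra.
case: i => // _; rewrite /ex_p /=.
- by rewrite (bigD1 D) //= big_pred0 ?addr0 //; case.
- by rewrite (bigD1 D) //= (bigD1 A) //= big_pred0 ?addr0 //; case.
- by rewrite (bigD1 D) //= (bigD1 A) //= big_pred0 ?addr0 //; case.
- by rewrite (bigD1 U) //= (bigD1 V) //= big_pred0 ?addr0 //; case.
Qed.

Definition ex_graph : Rgraph R :=
  @RGraph R ex_node bool D ex_par ex_ing ex_p
    ex_par_acyclic ex_dst_root ex_p_ge0 ex_p_sum1.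
Local Notation sel := (selection ex_graph).
Local Notation route := (@route R ex_graph).

Lemma supported_ex_values (s : sel) : supported s ->
  [/\ s A = D, s U = D \/ s U = A, s V = D \/ s V = A & s W = U \/ s W = V].
Proof.
move/forallP=> supp; move: (supp A) (supp U) (supp V) (supp W) => /=.
by case: (s A) => //= _; case: (s U) => //= _; case: (s V) => //= _;
  case: (s W) => //= _; split; auto.
Qed.

Definition ex_routing (cu cv cw : bool) (i : ex_node) : bool :=
  match i with D | A => false | U => cu | V => cv | W => if cw then cu else cv end.

Lemma route_supported (s : sel) i : supported s ->
  route s i = ex_routing (s U == D) (s V == D) (s W == U) i.
Proof.
case/supported_ex_values=> sA sU sV sW; rewrite (@route_fixpoint _ _ _ _ 2) ?card_ex_node //;
  case: i; case: sU => sU; case: sV => sV; case: sW => sW; rewrite /step /=;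
  by do 3! rewrite ?sA ?sU ?sV ?sW /=.
Qed.

Definition ex_sel (cu cv cw : bool) : sel := [ffun i => match i with
  | D | A => D | U => if cu then D else A | V => if cv then D else A
  | W => if cw then U else V end].

Lemma supported_ex_sel cu cv cw : supported (ex_sel cu cv cw).
Proof.
apply/forallP => i /=; rewrite ex_p_gt0 andbT ffunE.
by case: i; case: cu; case: cv; case: cw.
Qed.

Lemma route_ex_sel cu cv cw i : route (ex_sel cu cv cw) i = ex_routing cu cv cw i.
Proof.
by rewrite route_supported ?supported_ex_sel // !ffunE; case: cu; case: cv; case: cw.
Qed.

Local Notation determined := (@determined R ex_graph).
Local Notation agree_on := (@agree_on R ex_graph).
Local Notation NCsel := (@NCsel R ex_graph).

Lemma undetermined_ex_sel (X : {set ex_node}) (s : sel) i b1 b2 b3 c1 c2 c3 :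
  agree_on X s (ex_sel b1 b2 b3) -> agree_on X s (ex_sel c1 c2 c3) ->
  ex_routing b1 b2 b3 i != ex_routing c1 c2 c3 i -> ~~ determined X s i.
Proof.
by move=> agr1 agr2; rewrite -!route_ex_sel; apply: undetermined; rewrite ?supported_ex_sel.
Qed.

Lemma determined_A (X : {set ex_node}) (s : sel) : determined X s A.
Proof.
apply/existsP; exists false; apply/forall_inP => t /andP[supp_t _].
by rewrite route_supported.
Qed.

Lemma NCsel_ge_mem (X : {set ex_node}) (s : sel) :
  X \subset NR ex_graph -> (#|A |: X| <= NCsel X s)%N.
Proof.
move=> sXN; apply: NCsel_ge => i /setU1P[->|iX]; first by rewrite determined_A.
by rewrite determined_mem // andbT; move/subsetP: sXN => /(_ i iX); rewrite !inE => ->.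
Qed.

Lemma NCsel_le4 (X : {set ex_node}) (s : sel) : (NCsel X s <= 4)%N.
Proof.
rewrite -[4%N]/(5.-1) -card_ex_node -(cardsC1 D).
by apply: NCsel_le => i /andP[i_ndst _]; rewrite !inE.
Qed.

Lemma NCsel_set0 (s : sel) : supported s -> NCsel set0 s = 1%N.
Proof.
move=> supp_s; apply/anti_leq/andP; split; last first.
  by have := NCsel_ge_mem s (sub0set (NR ex_graph)); rewrite setU0 cards1.
rewrite -(cards1 A); apply: NCsel_le => i /andP[i_ndst]; apply: contraLR => i_notA.
apply: (@undetermined_ex_sel _ _ _ true true true false false true);
  try by apply/agree_onP => k; rewrite inE.
by case: i i_ndst i_notA; rewrite ?inE.
Qed.

Lemma NCsel_U (s : sel) : supported s -> (NCsel [set U] s <= 2)%N.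
Proof.
move=> supp_s; have <- : #|[set A; U]| = 2%N by rewrite cards2.
apply: NCsel_le => i /andP[i_ndst]; apply: contraLR => i_notAU.
apply: (@undetermined_ex_sel _ _ _ (s U == D) true false (s U == D) false false);
  try by apply/agree_onP => k; rewrite inE => /eqP ->; rewrite route_ex_sel route_supported.
by case: i i_ndst i_notAU; rewrite ?inE.
Qed.

Lemma NCsel_V (s : sel) : supported s -> (NCsel [set V] s <= 2)%N.
Proof.
move=> supp_s; have <- : #|[set A; V]| = 2%N by rewrite cards2.
apply: NCsel_le => i /andP[i_ndst]; apply: contraLR => i_notAV.
apply: (@undetermined_ex_sel _ _ _ true (s V == D) true false (s V == D) true);
  try by apply/agree_onP => k; rewrite inE => /eqP ->; rewrite route_ex_sel route_supported.
by case: i i_ndst i_notAV; rewrite ?inE.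
Qed.

Lemma NCsel_W (s : sel) : (2 <= NCsel [set W] s)%N.
Proof.
by have := @NCsel_ge_mem [set W] s; rewrite /NR subsetC sub1set !inE cards2; apply.
Qed.

Lemma NCsel_UV (s : sel) : (3 <= NCsel [set U; V] s)%N.
Proof.
have := @NCsel_ge_mem [set U; V] s.
by rewrite /NR subsetC sub1set !inE !cardsU1 cards1 !inE; apply.
Qed.

Definition s_direct := ex_sel true true true.

Lemma determined_W_direct (X : {set ex_node}) :
  U \in X -> V \in X -> determined X s_direct W.
Proof.
move=> UX VX; apply/existsP; exists true.
apply/forall_inP => t /andP[supp_t /agree_onP agr].
move: (agr U UX) (agr V VX); rewrite !route_ex_sel !route_supported //= => -> ->.
by case: ifP.
Qed.

Lemma NCsel_direct (X : {set ex_node}) : U \in X -> V \in X -> (4 <= NCsel X s_direct)%N.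
Proof.
move=> UX VX; rewrite -[4%N]/(5.-1) -card_ex_node -(cardsC1 D).
apply: NCsel_ge => i; rewrite !inE => i_ndst; rewrite i_ndst /=.
case: i i_ndst => // _; [exact: determined_A | exact: determined_mem |
  exact: determined_mem | exact: determined_W_direct].
Qed.

Local Notation F := (@F R ex_graph).

Lemma ex_not_submodular : ~ submodular_on (NR ex_graph) F.
Proof.
move=> /(_ set0 [set V] U (sub0set _)); rewrite /NR subsetC sub1set !inE /=.
move=> /(_ isT isT isT); rewrite setU0.
have : F [set U] + F [set V] < F [set U; V] + F set0.
  have supp_direct : supported s_direct := supported_ex_sel true true true.
  apply: (F_add_lt _ supp_direct) => [s supp_s|].
    have := NCsel_U supp_s; have := NCsel_V supp_s; have := NCsel_set0 supp_s.
    have := NCsel_UV s; lia.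
  have := NCsel_U supp_direct; have := NCsel_V supp_direct.
  have := NCsel_set0 supp_direct.
  have := @NCsel_direct [set U; V]; rewrite !inE !eqxx orbT => /(_ isT isT); lia.
lra.
Qed.

Lemma ex_not_supermodular : ~ supermodular_on (NR ex_graph) F.
Proof.
move=> /(_ set0 [set U; V] W (sub0set _)); rewrite /NR subsetC sub1set !inE /=.
move=> /(_ isT isT isT); rewrite setU0.
have : F (W |: [set U; V]) + F set0 < F [set W] + F [set U; V].
  have supp_direct : supported s_direct := supported_ex_sel true true true.
  apply: (F_add_lt _ supp_direct) => [s supp_s|].
    have := NCsel_le4 (W |: [set U; V]) s; have := NCsel_set0 supp_s.
    have := NCsel_W s; have := NCsel_UV s; lia.
  have := NCsel_le4 (W |: [set U; V]) s_direct; have := NCsel_set0 supp_direct.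
  have := NCsel_W s_direct.
  have := @NCsel_direct [set U; V]; rewrite !inE !eqxx orbT => /(_ isT isT); lia.
lra.
Qed.

End Counterexample.

Theorem lemma4p1 (R : realFieldType) :
  (forall G : Rgraph R,
     (forall X : {set node G}, X \subset NR G -> 0 <= F X) /\
     (forall X Y : {set node G}, X \subset Y -> Y \subset NR G -> F X <= F Y))
  /\ (exists G : Rgraph R, ~ submodular_on (NR G) (@F R G))
  /\ (exists G : Rgraph R, ~ supermodular_on (NR G) (@F R G)).
Proof.
split; [|split].
- by move=> G; split=> [X _|X Y sXY _]; [exact: F_ge0 | exact: F_mono].
- by exists (ex_graph R); exact: ex_not_submodular.
- by exists (ex_graph R); exact: ex_not_supermodular.
Qed.
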